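(* Assume the setting of the context. Let $m\geq 0$ and $0\le k<hl^m$, and write $k=\sum_{i=0}^m k_il^i$ with $0\le k_m<h$ and $0\le k_i<l$ for $0\le i<m$. Then $$\{y_{k+nhl^m} : n\in\mathbb Z\}=\phi(\mathcal C),$$ where $\mathcal C$ is the terminal vertex of the (unique) walk in $G(\sigma)$ that starts at $\mathcal A_{k_m}$ and successively follows edges labelled $k_{m-1},k_{m-2},\dots,k_0$.
   Context: Let $\sigma:\mathcal A^*\to\mathcal A^*$ be a primitive substitution of constant length $l\ge2$ ($|\sigma(a)|=l$ for all $a$), $x\in\mathcal A^{\mathbb Z}$ an admissible two-sided fixed point of $\sigma$ (so $x_{lj+i}=\sigma(x_j)_i$ for $j\in\mathbb Z$, $0\le i<l$, where $w_i$ denotes the $i$-th letter of $w$ indexed from $0$), $\phi:\mathcal A\to\mathcal B$ a coding, $y=\phi(x)$; $(X,S)$ is the subshift generated by $x$, assumed non-periodic. The height is $h=\max\{n\ge1 : \gcd(n,l)=1,\ n \mid g_0\}$ where $g_0=\gcd\{n\ge1 : x_n=x_0\}$. For $0\le i<h$, $\mathcal A_i=\{x_{i+nh}:n\in\mathbb Z\}$; these sets partition $\mathcal A$. The graph $G(\sigma)$: vertices are subsets of $\mathcal A$; for a subset $\mathcal C$ and $0\le i<l$ there is an edge labelled $i$ from $\mathcal C$ to $\{\sigma(b)_i : b\in\mathcal C\}$; $G(\sigma)$ is restricted to the vertices reachable from $\mathcal A_0,\dots,\mathcal A_{h-1}$. For $\mathcal C\subseteq\mathcal A$, $\phi(\mathcal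 C)=\{\phi(c):c\in\mathcal C\}$. *)

From HB Require Import structures.
From mathcomp Require Import all_boot all_order all_algebra.
Set Implicit Arguments. Unset Strict Implicit. Unset Printing Implicit Defensive.
Import Order.TTheory GRing.Theory Num.Theory.
Local Open Scope ring_scope.

Section Defs.
Variable A : finType.

Definition subst_word (sigma : A -> seq A) (w : seq A) : seq A :=
  flatten (map sigma w).

Definition subst_iter (sigma : A -> seq A) (n : nat) (w : seq A) : seq A :=
  iter n (subst_word sigma) w.

Definition const_length (sigma : A -> seq A) (l : nat) : Prop :=
  forall a, size (sigma a) = l.

Definition primitive (sigma : A -> seq A) : Prop :=
  exists n : nat, (0 < n)%N /\ forall a b : A, b \in subst_iter sigma n [:: a].

Definition two_sided_fixed_point (sigma : A -> seq A) (l : nat) (x : int -> A) : Prop :=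
  forall (j : int) (i : nat), (i < l)%N ->
    x (l%:Z * j + i%:Z) = nth (x j) (sigma (x j)) i.

Definition admissible (sigma : A -> seq A) (x : int -> A) : Prop :=
  exists (a : A) (n : nat), infix [:: x (-1); x 0] (subst_iter sigma n [:: a]).

Definition periodic_seq (x : int -> A) : Prop :=
  exists p : nat, (0 < p)%N /\ forall n : int, x (n + p%:Z) = x n.

(* h is the height: h = max {n >= 1 : gcd(n,l) = 1, n | g0},
   where g0 = gcd {n >= 1 : x_n = x_0}; "n | g0" is unfolded as
   "n divides every n' >= 1 with x_{n'} = x_0". *)
Definition height_cond (x : int -> A) (l n : nat) : Prop :=
  [/\ (1 <= n)%N, coprime n l &
      forall n' : nat, (1 <= n')%N -> x n'%:Z = x 0 -> (n %| n')%N].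

Definition is_height (x : int -> A) (l h : nat) : Prop :=
  height_cond x l h /\ forall n, height_cond x l n -> (n <= h)%N.

Definition A_class (x : int -> A) (h i : nat) : A -> Prop :=
  fun a => exists n : int, x (i%:Z + n * h%:Z) = a.

(* edge labelled i of G(sigma): C |-> {sigma(b)_i : b in C} *)
Definition G_step (sigma : A -> seq A) (C : A -> Prop) (i : nat) : A -> Prop :=
  fun a => exists b, C b /\ nth b (sigma b) i = a.

Definition G_walk (sigma : A -> seq A) (C : A -> Prop) (labels : seq nat) : A -> Prop :=
  foldl (G_step sigma) C labels.

End Defs.

From HB Require Import structures.
From mathcomp Require Import all_boot all_order all_algebra.
From mathcomp Require Import ring.
Set Implicit Arguments. Unset Strict Implicit. Unset Printing Implicit Defensive.
Import Order.TTheory GRing.Theory Num.Theory.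
Local Open Scope ring_scope.

(* Writing k = k_0 + l k' with
   k' = sum_i k_(i+1) l^i, the progression k + n h l^(m+1) is l times the
   progression k' + n h l^m shifted by the digit k_0, so its letters are the
   k_0-th letters of the images under sigma of the letters along the shorter
   progression: one edge of G(sigma) per digit, by induction on m. *)

Section Progressions.
Variables (A : finType) (sigma : A -> seq A) (l : nat) (x : int -> A).

Definition progression_letters (start step : int) : A -> Prop :=
  fun a => exists n : int, x (start + n * step) = a.

Hypothesis hfix : two_sided_fixed_point sigma l x.

Lemma progression_letters_scale (start step : int) (i : nat) (a : A) :
  (i < l)%N ->
  progression_letters (l%:Z * start + i%:Z) (l%:Z * step) a <->
  G_step sigma (progression_letters start step) i a.
Proof.
move=> il.
have shift n : l%:Z * start + i%:Z + n * (l%:Z * step)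
             = l%:Z * (start + n * step) + i%:Z by ring.
split=> [[n <-] | [b [[n <-] <-]]].
  by exists (x (start + n * step)); split; [exists n | rewrite shift hfix].
by exists n; rewrite shift hfix.
Qed.

Lemma digits_sum_recl (kd : nat -> nat) (m : nat) :
  (\sum_(i < m.+2) kd i * l ^ i = kd 0 + l * \sum_(i < m.+1) kd i.+1 * l ^ i)%N.
Proof.
rewrite big_ord_recl expn0 muln1 big_distrr; congr (_ + _)%N.
by apply: eq_bigr => i _; rewrite expnS mulnCA.
Qed.

Lemma G_walk_digits_recl (C : A -> Prop) (kd : nat -> nat) (m : nat) :
  G_walk sigma C (rev (map kd (iota 0 m.+1))) =
  G_step sigma (G_walk sigma C (rev (map (kd \o succn) (iota 0 m)))) (kd 0).
Proof.
by rewrite /G_walk /= rev_cons foldl_rcons (iotaDl 1 0) -map_comp.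
Qed.

Lemma progression_letters_G_walk (h m : nat) (kd : nat -> nat) (a : A) :
  (forall i, (i < m)%N -> (kd i < l)%N) ->
  progression_letters (\sum_(i < m.+1) kd i * l ^ i)%N%:Z (h * l ^ m)%N%:Z a <->
  G_walk sigma (A_class x h (kd m)) (rev (map kd (iota 0 m))) a.
Proof.
elim: m kd a => [|m IH] kd a kd_lt.
  by rewrite big_ord1 expn0 !muln1.
rewrite G_walk_digits_recl digits_sum_recl PoszD PoszM expnS mulnCA PoszM.
rewrite [X in progression_letters X]addrC.
rewrite progression_letters_scale; last exact: kd_lt.
have IHm b := IH (kd \o succn) b (fun i im => kd_lt i.+1 im).
by split=> -[b [Pb <-]]; exists b; split; [apply/IHm | | apply/IHm |].
Qed.

End Progressions.

Theorem mainTheorem13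
  (A : finType) (B : Type) (sigma : A -> seq A) (l : nat) (x : int -> A)
  (phi : A -> B) (h : nat)
  (hl : (2 <= l)%N)
  (hconst : const_length sigma l)
  (hprim : primitive sigma)
  (hfix : two_sided_fixed_point sigma l x)
  (hadm : admissible sigma x)
  (hnonper : ~ periodic_seq x)
  (hheight : is_height x l h)
  (m k : nat) (kd : nat -> nat)
  (hk : (k < h * l ^ m)%N)
  (hkm : (kd m < h)%N)
  (hki : forall i, (i < m)%N -> (kd i < l)%N)
  (hksum : k = (\sum_(i < m.+1) kd i * l ^ i)%N) :
  forall b : B,
    (exists n : int, phi (x (k%:Z + n * (h * l ^ m)%N%:Z)) = b) <->
    (exists c : A,
       G_walk sigma (A_class x h (kd m)) (rev (map kd (iota 0 m))) c /\ phi c = b).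
Proof.
move=> b; rewrite hksum.
set K := (\sum_(i < m.+1) kd i * l ^ i)%N.
have walk c := progression_letters_G_walk hfix h c hki.
split=> [[n <-] | [c [Wc <-]]].
  exists (x (K%:Z + n * (h * l ^ m)%N%:Z)); split=> //.
  by apply/walk; exists n.
by have [n <-] := proj2 (walk c) Wc; exists n.
Qed.
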